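(* Let $q\not\equiv0\pmod3$, $\mu\in\mathbb{F}_q$, and let $\ell_\mu$ be the line through $\mathbf{P}(0,\mu,0,1)$ and $\mathbf{P}(1,0,1,0)$. Then: (i) $\ell_\mu$ is an imaginary axis if and only if $q$ is odd, $q\equiv-1\pmod3$ and $\mu=1/9$; (ii) $\ell_\mu$ is a real axis if and only if $q$ is odd, $q\equiv1\pmod3$ and $\mu=1/9$.
   Context: Points of $\mathrm{PG}(3,q)$ are written $\mathbf{P}(x_0,x_1,x_2,x_3)$ over $\mathbb{F}_q$. For $t$ in $\mathbb{F}_q$ or $\mathbb{F}_{q^2}$ the osculating plane $\pi_{osc}(t)$ of the twisted cubic $\{\mathbf{P}(t^3,t^2,t,1)\}\cup\{\mathbf{P}(1,0,0,0)\}$ is the plane $x_0-3tx_1+3t^2x_2-t^3x_3=0$, and $\pi_{osc}(\infty)$ is $x_3=0$. A real axis is a line $\pi_{osc}(t_1)\cap\pi_{osc}(t_2)$ with $t_1\ne t_2$ in $\mathbb{F}_q\cup\{\infty\}$; an imaginary axis is a line of $\mathrm{PG}(3,q)$ of the form $\pi_{osc}(t_1)\cap\pi_{osc}(t_2)$ with $t_1,t_2=t_1^q\in\mathbb{F}_{q^2}\setminus\mathbb{F}_q$. *)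

From HB Require Import structures.
From mathcomp Require Import all_boot all_order all_algebra all_field.
Set Implicit Arguments. Unset Strict Implicit. Unset Printing Implicit Defensive.
Import GRing.Theory.
Local Open Scope ring_scope.

(* Vectors of K^4 representing points P(x0,x1,x2,x3) of PG(3,K). *)
Definition pt {K : fieldType} (a b c d : K) : 'rV[K]_4 :=
  \row_(i < 4) [:: a; b; c; d]`_i.

Definition crd {K : fieldType} (x : 'rV[K]_4) (i : nat) : K := x ord0 (inord i).

Definition osc_plane {K : fieldType} (t : K) (x : 'rV[K]_4) : Prop :=
  crd x 0 - 3 * t * crd x 1 + 3 * t ^+ 2 * crd x 2 - t ^+ 3 * crd x 3 = 0.

(* t in K u {infinity}; None is infinity, pi_osc(infinity) : x3 = 0. *)
Definition osc_plane_inf {K : fieldType} (t : option K) (x : 'rV[K]_4) : Prop :=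
  match t with
  | Some s => osc_plane s x
  | None => crd x 3 = 0
  end.

(* Vector subspace spanned by u and v (the line through P(u), P(v)),
   described as a set of vectors of K^4. *)
Definition span2 {K : fieldType} (u v : 'rV[K]_4) (x : 'rV[K]_4) : Prop :=
  exists a b : K, x = a *: u + b *: v.

Definition ell {K : fieldType} (mu : K) : 'rV[K]_4 -> Prop :=
  span2 (pt 0 mu 0 1) (pt 1 0 1 0).

Definition real_axis {F : fieldType} (S : 'rV[F]_4 -> Prop) : Prop :=
  exists t1 t2 : option F, t1 <> t2 /\
    forall x, S x <-> (osc_plane_inf t1 x /\ osc_plane_inf t2 x).

(* Imaginary axis: with F_{q^2} given as L together with the embedding
   iota : F -> L, the line of PG(3,q) consisting of the F-rational points of
   pi_osc(t1) cap pi_osc(t1^q), with t1 in L \ F. *)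
Definition imag_axis {F L : finFieldType} (iota : {rmorphism F -> L})
    (S : 'rV[F]_4 -> Prop) : Prop :=
  exists t1 : L, (forall a : F, t1 <> iota a) /\
    forall x, S x <-> (osc_plane t1 (map_mx iota x) /\
                       osc_plane (t1 ^+ #|F|) (map_mx iota x)).

From HB Require Import structures.
From mathcomp Require Import all_boot all_order all_algebra all_field.
From mathcomp Require Import all_fingroup all_solvable.
From mathcomp Require Import ring zify.
Set Implicit Arguments.
Unset Strict Implicit.
Unset Printing Implicit Defensive.
Import GRing.Theory.
Local Open Scope ring_scope.

(* The point P(1,0,1,0) lies on pi_osc(t) iff 3t^2 = -1; for such t the
   plane pi_osc(t) is 3(x0 - x2) = t(9x1 - x3), which contains P(0,mu,0,1)
   iff 9mu = 1, and the two roots t, -t of 3t^2 = -1 cut out exactly the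
   line x0 = x2, 9x1 = x3, i.e. l_(1/9); pi_osc(oo) misses P(0,mu,0,1).
   So l_mu is an axis iff mu = 1/9 and 3t^2 = -1 has two distinct roots,
   which needs q odd (in characteristic 2 the only root is the double root
   t = 1).  The roots lie in F_q iff F_q contains a primitive cube root of
   unity w = (3t - 1)/2, i.e. iff q = 1 (mod 3); otherwise they lie in
   F_(q^2) \ F_q and are swapped by the Frobenius map. *)

Section FiniteFieldArithmetic.
Variable F : finFieldType.

Lemma natf_eq0_dvd_card l : prime l -> (l%:R == 0 :> F) = (l %| #|F|)%N.
Proof.
move=> l_pr; have [p p_pr pF] := finPcharP F.
have cardF : #|F| = (p ^ logn p #|F|)%N := card_pprimeChar pF.
have logF_gt0 : (0 < logn p #|F|)%N.
  by move: (finNzRing_gt1 F); rewrite [X in (1 < X)%N]cardF; case: logn.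
rewrite -(dvdn_pcharf pF) cardF Euclid_dvdX // logF_gt0 andbT.
by rewrite !dvdn_prime2 // eq_sym.
Qed.

Lemma odd_card_finField : odd #|F| = (2%:R != 0 :> F).
Proof. by rewrite natf_eq0_dvd_card // dvdn2 negbK. Qed.

Lemma natf3_neq0 : (3%:R != 0 :> F) = (#|F| %% 3 != 0)%N.
Proof. by rewrite natf_eq0_dvd_card. Qed.

Lemma cube_root_unity_finField :
  (exists w : F, w ^+ 3 = 1 /\ w != 1) <-> (#|F| %% 3 = 1)%N.
Proof.
split=> [[w [w3 w_neq1]] | q1].
  have w_neq0 : w != 0.
    by apply: contra_eq_neq w3 => ->; rewrite expr0n eq_sym oner_neq0.
  have : w ^+ (#|F| %% 3) = w.
    by rewrite -[RHS](expf_card w) {2}(divn_eq #|F| 3) exprD mulnC exprM w3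
      expr1n mul1r.
  have : (#|F| %% 3 < 3)%N by rewrite ltn_mod.
  case: (_ %% 3)%N => [|[|[|//]]] // _.
    by rewrite expr0 => /esym/eqP; rewrite (negbTE w_neq1).
  rewrite expr2 -[X in _ = X]mul1r => /(mulIf w_neq0)/eqP.
  by rewrite (negbTE w_neq1).
have dvd3 : (3 %| #|[set: {unit F}]|)%N.
  by rewrite card_finField_unit (divn_eq #|F| 3) q1 addn1 dvdn_mull.
have [u _ ord_u] := Cauchy (isT : prime 3) dvd3.
exists (val u); split; first by rewrite -FinRing.val_unitX -ord_u expg_order.
apply/eqP => u1; have u_eq1 : u = 1%g by apply: val_inj.
by move: ord_u; rewrite u_eq1 order1.
Qed.

End FiniteFieldArithmetic.

Section NegThirdSquares.
Variable K : fieldType.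

Lemma neg_third_sqr_neq0 (s : K) : 3 * s ^+ 2 = -1 -> 3%:R != 0 :> K /\ s != 0.
Proof.
move=> hs; split; apply/eqP => h0; move: hs; rewrite h0 ?mul0r ?expr0n ?mulr0 //=.
  by move/eqP; rewrite eq_sym oppr_eq0 oner_eq0.
by move/eqP; rewrite eq_sym oppr_eq0 oner_eq0.
Qed.

Lemma neg_third_sqr_eq (s t : K) :
  3 * s ^+ 2 = -1 -> 3 * t ^+ 2 = -1 -> t = s \/ t = - s.
Proof.
move=> hs ht; have [h3 _] := neg_third_sqr_neq0 hs.
have : 3 * ((t - s) * (t + s)) = 0.
  have -> : 3 * ((t - s) * (t + s)) = 3 * t ^+ 2 - 3 * s ^+ 2 by ring.
  by rewrite hs ht subrr.
move/eqP; rewrite !mulf_eq0 (negbTE h3) subr_eq0 addr_eq0 /=.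
by case/orP=> /eqP; [left | right].
Qed.

Lemma neg_third_sqr_char2 : 2%:R = 0 :> K -> 3 * 1 ^+ 2 = -1 :> K.
Proof.
move=> h2; apply/eqP; rewrite -subr_eq0 opprK.
have -> : 3 * 1 ^+ 2 + 1 = 2%:R * 2%:R :> K by ring.
by rewrite h2 mul0r.
Qed.

Lemma cube_root_unityE (w : K) :
  3%:R != 0 :> K -> (w ^+ 3 = 1 /\ w != 1) <-> w ^+ 2 + w + 1 = 0.
Proof.
move=> h3; have w3E : w ^+ 3 - 1 = (w - 1) * (w ^+ 2 + w + 1) by ring.
split=> [[w3 w_neq1] | ww].
  move: w3E; rewrite w3 subrr => /esym/eqP.
  by rewrite mulf_eq0 subr_eq0 (negbTE w_neq1) => /eqP.
split; first by apply/eqP; rewrite -subr_eq0 w3E ww mulr0.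
by apply: contra_neq h3 => w1; rewrite -ww w1; ring.
Qed.

Lemma neg_third_sqr_cube_root :
  2%:R != 0 :> K -> 3%:R != 0 :> K ->
  (exists s : K, 3 * s ^+ 2 = -1) <-> (exists w : K, w ^+ 2 + w + 1 = 0).
Proof.
move=> h2 h3; split=> [[s hs] | [w hw]].
  have h4 : 4%:R != 0 :> K by rewrite -[4%N]/(2 * 2)%N natrM mulf_neq0.
  exists ((3 * s - 1) / 2).
  have -> : ((3 * s - 1) / 2) ^+ 2 + (3 * s - 1) / 2 + 1
            = 3 * (3 * s ^+ 2 + 1) / 4 by field; rewrite h4.
  by rewrite hs addNr mulr0 mul0r.
exists ((2 * w + 1) / 3).
have -> : 3 * ((2 * w + 1) / 3) ^+ 2 = (4 * (w ^+ 2 + w + 1) - 3) / 3 by field.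
by rewrite hw mulr0 sub0r mulNr divff.
Qed.

End NegThirdSquares.

Lemma neg_third_sqr_finField (F : finFieldType) :
  (exists s : F, 3 * s ^+ 2 = -1) <-> ~~ odd #|F| \/ (#|F| %% 3 = 1)%N.
Proof.
rewrite odd_card_finField negbK.
have [h2 | h2] := eqVneq (2%:R : F) 0.
  by split=> [_ | _]; [left | exists 1; apply: neg_third_sqr_char2].
split=> [[s hs] | [// | q1]]; first (right; apply/cube_root_unity_finField).
- have [h3 _] := neg_third_sqr_neq0 hs.
  have [w /(cube_root_unityE _ h3) ?] :=
    (neg_third_sqr_cube_root h2 h3).1 (ex_intro _ s hs).
  by exists w.
- have h3 : 3%:R != 0 :> F by rewrite natf3_neq0 q1.
  apply/(neg_third_sqr_cube_root h2 h3).
  have [w /(cube_root_unityE _ h3) ?] := (cube_root_unity_finField F).2 q1.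
  by exists w.
Qed.

Lemma rmorph_expcard (F : finFieldType) (R : pzRingType) (f : {rmorphism F -> R})
    (a : F) :
  f a ^+ #|F| = f a.
Proof. by rewrite -rmorphXn expf_card. Qed.

Lemma neg_third_sqr_expcard (F : finFieldType) (L : fieldType)
    (iota : {rmorphism F -> L}) (t : L) :
  3 * t ^+ 2 = -1 -> 3 * (t ^+ #|F|) ^+ 2 = -1.
Proof.
move=> ht.
rewrite -(rmorph_nat iota) -(rmorph_expcard iota) -exprM mulnC exprM -exprMn.
by rewrite rmorph_nat ht -(rmorph1 iota) -rmorphN rmorph_expcard.
Qed.

Lemma rmorph_irrational_eq (K K' : fieldType) (f : {rmorphism K -> K'}) (t : K')
    (a b : K) :
  (forall c, t <> f c) -> f a = t * f b -> a = 0 /\ b = 0.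
Proof.
move=> t_irr e; have [b0 | b_neq0] := eqVneq b 0.
  by split=> //; apply/eqP; rewrite -(fmorph_eq0 f) e b0 rmorph0 mulr0.
by case: (t_irr (a / b)); rewrite fmorph_div e mulfK // fmorph_eq0.
Qed.

Section Coordinates.
Variable K : fieldType.
Implicit Types (a b c d : K) (x y : 'rV[K]_4).

Lemma crd_pt a b c d i : (i < 4)%N -> crd (pt a b c d) i = [:: a; b; c; d]`_i.
Proof. by move=> lti; rewrite /crd /pt mxE inordK. Qed.

Lemma crdD x y i : crd (x + y) i = crd x i + crd y i.
Proof. by rewrite /crd mxE. Qed.

Lemma crdZ a x i : crd (a *: x) i = a * crd x i.
Proof. by rewrite /crd mxE. Qed.

Lemma crd_map (K' : fieldType) (f : {rmorphism K -> K'}) x i :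
  crd (map_mx f x) i = f (crd x i).
Proof. by rewrite /crd mxE. Qed.

Lemma crdP x y : (forall i, (i < 4)%N -> crd x i = crd y i) -> x = y.
Proof.
by move=> exy; apply/rowP => j; have := exy _ (ltn_ord j); rewrite /crd inord_val.
Qed.

End Coordinates.

Lemma map_pt (K K' : fieldType) (f : {rmorphism K -> K'}) (a b c d : K) :
  map_mx f (pt a b c d) = pt (f a) (f b) (f c) (f d).
Proof. by apply: crdP => -[|[|[|[|//]]]] _; rewrite crd_map !crd_pt. Qed.

Section Line.
Variable K : fieldType.
Implicit Types (mu t : K) (x : 'rV[K]_4).

Lemma ell_pt1 mu : ell mu (pt 0 mu 0 1).
Proof. by exists 1, 0; rewrite scale1r scale0r addr0. Qed.

Lemma ell_pt2 mu : ell mu (pt 1 0 1 0).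
Proof. by exists 0, 1; rewrite scale1r scale0r add0r. Qed.

Lemma map_ell (K' : fieldType) (f : {rmorphism K -> K'}) mu x :
  ell mu x -> ell (f mu) (map_mx f x).
Proof.
case=> a [b ->]; exists (f a), (f b).
by rewrite map_mxD !map_mxZ !map_pt rmorph0 rmorph1.
Qed.

Lemma ell_crd mu x :
  9 * mu = 1 -> ell mu x <-> crd x 0 = crd x 2 /\ 9 * crd x 1 = crd x 3.
Proof.
move=> hmu; split=> [[a [b ->]] | [x02 x13]].
  rewrite !crdD !crdZ !crd_pt //=; split; first ring.
  by transitivity (a * (9 * mu)); [ring | rewrite hmu; ring].
exists (crd x 3), (crd x 0); apply: crdP => -[|[|[|[|//]]]] _;
  rewrite !crdD !crdZ !crd_pt //=; try ring.
- transitivity (crd x 1 * (9 * mu)); first by rewrite hmu mulr1.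
  by rewrite -x13; ring.
- by rewrite x02; ring.
Qed.

Lemma osc_plane_neg_third t x :
  3 * t ^+ 2 = -1 ->
  osc_plane t x <-> 3 * (crd x 0 - crd x 2) = t * (9 * crd x 1 - crd x 3).
Proof.
move=> ht; have [h3 _] := neg_third_sqr_neq0 ht.
have oscE : 3 * (crd x 0 - crd x 2) - t * (9 * crd x 1 - crd x 3)
    = 3 * (crd x 0 - 3 * t * crd x 1 + 3 * t ^+ 2 * crd x 2 - t ^+ 3 * crd x 3)
      + (3 * t ^+ 2 + 1) * (t * crd x 3 - 3 * crd x 2) by ring.
have ht1 : 3 * t ^+ 2 + 1 = 0 by rewrite ht addNr.
rewrite ht1 mul0r addr0 in oscE.
rewrite /osc_plane; split=> hx.
  by apply/eqP; rewrite -subr_eq0 oscE hx mulr0.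
by apply: (mulfI h3); rewrite mulr0 -oscE hx subrr.
Qed.

Lemma osc_plane_pts t mu :
  osc_plane t (pt 0 mu 0 1) -> osc_plane t (pt 1 0 1 0) ->
  3 * t ^+ 2 = -1 /\ 9 * mu = 1.
Proof.
move=> hu hv; have ht : 3 * t ^+ 2 = -1.
  move: hv; rewrite /osc_plane !crd_pt //= => hv.
  by apply/eqP; rewrite -subr_eq0 opprK -hv; apply/eqP; ring.
split=> //; have [_ t_neq0] := neg_third_sqr_neq0 ht.
move: hu => /(osc_plane_neg_third _ ht); rewrite !crd_pt //= subrr mulr0.
by move/esym/eqP; rewrite mulf_eq0 (negbTE t_neq0) subr_eq0 => /eqP.
Qed.

Lemma osc_plane_inf_pts (t : option K) mu :
  osc_plane_inf t (pt 0 mu 0 1) -> osc_plane_inf t (pt 1 0 1 0) ->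
  exists2 s, t = Some s & 3 * s ^+ 2 = -1 /\ 9 * mu = 1.
Proof.
case: t => [s hu hv | /=]; first by exists s; last exact: osc_plane_pts.
by rewrite crd_pt //= => /eqP; rewrite oner_eq0.
Qed.

Lemma ell_sub_osc_plane t mu x :
  3 * t ^+ 2 = -1 -> 9 * mu = 1 -> ell mu x -> osc_plane t x.
Proof.
move=> ht hmu /(ell_crd _ hmu)[x02 x13]; apply/(osc_plane_neg_third _ ht).
by rewrite x02 x13 !subrr !mulr0.
Qed.

Lemma ell_osc_plane_opp t mu x :
  2%:R != 0 :> K -> 3 * t ^+ 2 = -1 -> 9 * mu = 1 ->
  ell mu x <-> osc_plane t x /\ osc_plane (- t) x.
Proof.
move=> h2 ht hmu; have ht' : 3 * (- t) ^+ 2 = -1 by rewrite sqrrN.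
have [h3 t_neq0] := neg_third_sqr_neq0 ht.
split=> [hx | [/(osc_plane_neg_third _ ht) e1 /(osc_plane_neg_third _ ht') e2]].
  by split; [exact: ell_sub_osc_plane ht hmu hx | exact: ell_sub_osc_plane ht' hmu hx].
set D := 9 * crd x 1 - crd x 3 in e1 e2.
have D0 : D = 0.
  have : 2%:R * t * D = t * D - (- t) * D by ring.
  rewrite -e1 -e2 subrr => /eqP.
  by rewrite !mulf_eq0 (negbTE h2) (negbTE t_neq0) => /eqP.
apply/(ell_crd _ hmu); split; last by apply/eqP; rewrite -subr_eq0 -/D D0.
move: e1; rewrite D0 mulr0 => /eqP.
by rewrite mulf_eq0 (negbTE h3) subr_eq0 => /eqP.
Qed.

End Line.

Lemma osc_plane_map_irrational (K K' : fieldType) (f : {rmorphism K -> K'})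
    (t : K') (mu : K) (x : 'rV[K]_4) :
  (forall c, t <> f c) -> 3 * t ^+ 2 = -1 -> 9 * mu = 1 ->
  osc_plane t (map_mx f x) -> ell mu x.
Proof.
move=> t_irr ht hmu /(osc_plane_neg_third _ ht) e.
have [e1 e2] : 3 * (crd x 0 - crd x 2) = 0 /\ 9 * crd x 1 - crd x 3 = 0.
  apply: (rmorph_irrational_eq t_irr).
  by rewrite !(rmorphM, rmorphB, rmorph_nat) -!crd_map.
have [h3 _] := neg_third_sqr_neq0 ht.
have h3K : 3%:R != 0 :> K by rewrite -(fmorph_eq0 f) rmorph_nat.
apply/(ell_crd _ hmu); split; last by apply/eqP; rewrite -subr_eq0 e2.
by move: e1 => /eqP; rewrite mulf_eq0 (negbTE h3K) subr_eq0 => /eqP.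
Qed.

Lemma real_axis_ellP (K : fieldType) (mu : K) :
  real_axis (ell mu) <->
  [/\ 2%:R != 0 :> K, exists s : K, 3 * s ^+ 2 = -1 & 9 * mu = 1].
Proof.
split=> [[t1 [t2 [t12 H]]] | [h2 [s hs] hmu]].
  have [hu1 hu2] := (H _).1 (ell_pt1 mu); have [hv1 hv2] := (H _).1 (ell_pt2 mu).
  have [s1 t1E [hs1 hmu]] := osc_plane_inf_pts hu1 hv1.
  have [s2 t2E [hs2 _]] := osc_plane_inf_pts hu2 hv2.
  rewrite {}t1E {}t2E in t12.
  have s2E : s2 = - s1.
    by case: (neg_third_sqr_eq hs1 hs2) => // s21; case: t12; rewrite s21.
  split=> //; last by exists s1.
  apply/eqP => h2; apply: t12.
  by rewrite s2E oppr_pchar2 // inE /= h2 eqxx.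
exists (Some s), (Some (- s)); split; last by move=> x; apply: ell_osc_plane_opp.
have [_ s_neq0] := neg_third_sqr_neq0 hs.
case=> /eqP; rewrite -addr_eq0 -mulr2n -mulr_natl mulf_eq0.
by rewrite (negbTE h2) (negbTE s_neq0).
Qed.

Lemma imag_axis_ellP (F L : finFieldType) (iota : {rmorphism F -> L}) (mu : F) :
  (exists t : L, 3 * t ^+ 2 = -1) ->
  imag_axis iota (ell mu) <->
  ~ (exists s : F, 3 * s ^+ 2 = -1) /\ 9 * mu = 1.
Proof.
move=> [t ht]; split=> [[t1 [t1_irr H]] | [noroot hmu]].
  have [hu _] := (H _).1 (ell_pt1 mu); have [hv _] := (H _).1 (ell_pt2 mu).
  rewrite !map_pt !rmorph0 !rmorph1 in hu hv.
  have [ht1 h9] := osc_plane_pts hu hv.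
  split; last by apply: (fmorph_inj iota); rewrite rmorphM rmorph_nat rmorph1.
  case=> s hs; have hsL : 3 * iota s ^+ 2 = -1.
    by rewrite -(rmorph_nat iota) -rmorphXn -rmorphM hs rmorphN rmorph1.
  case: (neg_third_sqr_eq hsL ht1) => t1s; first exact: t1_irr t1s.
  by apply: (t1_irr (- s)); rewrite rmorphN.
have t_irr : forall a, t <> iota a.
  move=> a ta; apply: noroot; exists a; apply: (fmorph_inj iota).
  by rewrite rmorphM rmorphXn rmorph_nat -ta ht rmorphN rmorph1.
have h9 : 9 * iota mu = 1 by rewrite -(rmorph_nat iota) -rmorphM hmu rmorph1.
have htq := neg_third_sqr_expcard iota ht.
exists t; split=> // x; split=> [/(map_ell iota) hx | [hx _]].
  by split; apply: ell_sub_osc_plane hx.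
exact: osc_plane_map_irrational t_irr ht hmu hx.
Qed.

Theorem lemma4p3 (F L : finFieldType) (iota : {rmorphism F -> L})
  (hL : #|L| = (#|F| ^ 2)%N) (hq : (#|F| %% 3 != 0)%N) (mu : F) :
  (imag_axis iota (ell mu) <->
     [/\ odd #|F|, (#|F| %% 3 = 2)%N & mu = 9^-1]) /\
  (real_axis (ell mu) <->
     [/\ odd #|F|, (#|F| %% 3 = 1)%N & mu = 9^-1]).
Proof.
have q3 : (#|F| %% 3 = 1 \/ #|F| %% 3 = 2)%N by lia.
have rootL : exists t : L, 3 * t ^+ 2 = -1.
  by apply/neg_third_sqr_finField; right; rewrite hL -modnXm; case: q3 => ->.
have ninth : 9 * mu = 1 <-> mu = 9^-1.
  split=> [/mulr1_eq // | ->]; apply: mulfV.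
  by rewrite -[9%N]/(3 * 3)%N natrM mulf_neq0 ?natf3_neq0.
have rootF := neg_third_sqr_finField F.
split; split.
- case/(imag_axis_ellP _ _ rootL) => noroot /ninth ->.
  have odd_q : odd #|F| by apply/negPn/negP => ev; apply/noroot/rootF; left.
  by split=> //; case: q3 => // q1; case: noroot; apply/rootF; right.
- case=> odd_q q2 /ninth hmu; apply/(imag_axis_ellP _ _ rootL); split=> //.
  by move/rootF; rewrite odd_q q2 => -[].
- case/real_axis_ellP; rewrite -odd_card_finField => odd_q /rootF.
  by rewrite odd_q => -[// | q1 /ninth].
- case=> odd_q q1 /ninth hmu; apply/real_axis_ellP.
  by split=> //; [rewrite -odd_card_finField | apply/rootF; right].
Qed.
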